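(* Let $\langle \mathsf{E}, \mathsf{po}, \mathsf{mo}\rangle$ be a partial 1-Writer execution graph in which $\mathsf{mo}$ agrees with $\mathsf{po}$, and let $\mathsf{rf}_1,\mathsf{rf}_2$ be two reads-from relations over it. (1) If $\mathsf{rf}_1 \sqsubseteq \mathsf{rf}_2$ and $\mathsf{po}\cup\mathsf{rf}_1$ has a cycle, then $\mathsf{po}\cup\mathsf{rf}_2$ has a cycle. (2) If both $\mathsf{rf}_1$ and $\mathsf{rf}_2$ satisfy relaxed-read-coherence, then $\min(\mathsf{rf}_1,\mathsf{rf}_2)$ also satisfies relaxed-read-coherence.
   Context: Events are reads $\mathtt{r}(x,v)$ or writes $\mathtt{w}(x,v)$ on a variable $x$ with value $v$, each belonging to a thread; $\mathsf{po}$ (program order) is a strict partial order totally ordering the events of each thread and relating no events of different threads. 1-Writer: for every variable $x$ all writes to $x$ lie in a single thread. $\mathsf{mo}=\bigcup_x\mathsf{mo}_x$ with $\mathsf{mo}_x$ a strict total order on writes to $x$; ''agrees with $\mathsf{po}$'' means $w\,\mathsf{mo}\,w'$ implies $w\,\mathsf{po}\,w'$. A reads-from relation $\mathsf{rf}$ maps every read $r$ to a unique write $\mathsf{rf}^{-1}(r)$ with the same variable and value. $\mathsf{rf}_1\sqsubseteq\mathsf{rf}_2$ iff for every read $r$, $\mathsf{rf}_1^{-1}(r)\,\mathsf{po}^*\,\mathsf{rf}_2^{-1}(r)$. $\min(\mathsf{rf}_1,\mathsf{rf}_2)$ maps every read $r$ to the $\mathsf{po}$-smaller of $\mathsf{rf}_1^{-1}(r),\mathsf{rf}_2^{-1}(r)$.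 $\mathsf{rf}$ satisfies relaxed-read-coherence if the relation $\mathsf{rf}^{-1};\mathsf{mo}_x;\mathsf{rf}^?;\mathsf{po}$ is irreflexive for every $x$, i.e. there is no read $r$ of $x$ and writes $w,w'$ of $x$ with $w\,\mathsf{rf}\,r$, $w\,\mathsf{mo}_x\,w'$, and either $w'\,\mathsf{po}\,r$ or there is a read $r'$ with $w'\,\mathsf{rf}\,r'$ and $r'\,\mathsf{po}\,r$. *)

From Stdlib Require Import Relations.
From mathcomp Require Import all_boot.
Set Implicit Arguments. Unset Strict Implicit. Unset Printing Implicit Defensive.

Inductive label (Loc Val : Type) :=
| Rd of Loc & Val
| Wr of Loc & Val.

Section Exec.
Variables (E : finType) (Loc Val : eqType).
Variable lab : E -> label Loc Val.
Variable tid : E -> nat.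

Definition is_read (e : E) : bool := if lab e is Rd _ _ then true else false.
Definition is_write (e : E) : bool := if lab e is Wr _ _ then true else false.
Definition loc (e : E) : Loc := match lab e with Rd x _ => x | Wr x _ => x end.
Definition valu (e : E) : Val := match lab e with Rd _ v => v | Wr _ v => v end.

Definition po_wf (po : rel E) : Prop :=
  [/\ irreflexive po, transitive po,
      (forall a b, tid a = tid b -> a != b -> po a b || po b a) &
      (forall a b, po a b -> tid a = tid b)].

Definition one_writer : Prop :=
  forall w w', is_write w -> is_write w' -> loc w = loc w' -> tid w = tid w'.

Definition mo_wf (mo : rel E) : Prop :=
  [/\ (forall a b, mo a b -> [/\ is_write a, is_write b & loc a = loc b]),
      irreflexive mo, transitive mo &
      (forall a b, is_write a -> is_write b -> loc a = loc b -> a != b ->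
                   mo a b || mo b a)].

Definition mo_x (mo : rel E) (x : Loc) : rel E :=
  fun a b => [&& mo a b, loc a == x & loc b == x].

Definition mo_agrees_po (po mo : rel E) : Prop := forall w w', mo w w' -> po w w'.

(* A reads-from relation, given as the function r |-> rf^{-1}(r) on reads
   (its values on non-read events are irrelevant). *)
Definition rf_wf (rf : E -> E) : Prop :=
  forall r, is_read r ->
    [/\ is_write (rf r), loc (rf r) = loc r & valu (rf r) = valu r].

Definition rf_rel (rf : E -> E) (w r : E) : Prop := is_read r /\ rf r = w.

Definition rf_le (po : rel E) (rf1 rf2 : E -> E) : Prop :=
  forall r, is_read r -> rf1 r = rf2 r \/ po (rf1 r) (rf2 r).

Definition rf_min (po : rel E) (rf1 rf2 : E -> E) : E -> E :=
  fun r => if po (rf2 r) (rf1 r) then rf2 r else rf1 r.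

Definition po_rf (po : rel E) (rf : E -> E) (a b : E) : Prop :=
  po a b \/ rf_rel rf a b.
Definition has_cycle (R : E -> E -> Prop) : Prop :=
  exists e, clos_trans E R e e.

(* relaxed-read-coherence: rf^{-1}; mo_x; rf^?; po irreflexive for every x *)
Definition relaxed_read_coherence (po mo : rel E) (rf : E -> E) : Prop :=
  forall (x : Loc) (r w w' : E),
    rf_rel rf w r -> mo_x mo x w w' ->
    ~ (po w' r \/ exists r', rf_rel rf w' r' /\ po r' r).

End Exec.

From Stdlib Require Import Relations.
From mathcomp Require Import all_boot.

Set Implicit Arguments.
Unset Strict Implicit.
Unset Printing Implicit Defensive.

(* (1) An rf-edge w rf1 r is either an rf2-edge or can be rerouted as
   w po rf2(r) rf2 r, so every po ∪ rf1 path is a po ∪ rf2 path.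
   (2) Write m := min(rf1, rf2). Under 1-Writer the two candidate writes of a
   read are po-comparable, so m is po*-below both rf1 and rf2, and at each read
   r it coincides with one of them, say g. A violation w mo w' = m(r'), r' po r
   of m at r lifts to the violation w mo g(r'), r' po r of g, because mo agrees
   with po and so extends along po to later writes to the same variable. *)

Section ReadsFrom.
Variables (E : finType) (Loc Val : eqType) (lab : E -> label Loc Val).
Variables (po mo : rel E).

Lemma clos_trans_po_rf_le (rf1 rf2 : E -> E) a b :
  transitive po -> rf_le lab po rf1 rf2 ->
  clos_trans E (po_rf lab po rf1) a b -> clos_trans E (po_rf lab po rf2) a b.
Proof.
move=> po_tr le; elim=> [w r [po_wr | [Rr <-]] | a' b' c' _ IHab _ IHbc].
- by apply: t_step; left.
- case: (le r Rr) => [-> | po_12]; first by apply: t_step; right.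
  by apply: (t_trans _ _ _ (rf2 r)); apply: t_step; [left | right].
- exact: t_trans IHab IHbc.
Qed.

Hypotheses (po_irr : irreflexive po) (po_tr : transitive po).
Hypotheses (mo_ok : mo_wf lab mo) (mo_po : mo_agrees_po po mo).

Lemma mo_po_trans w w' w'' :
  mo w w' -> po w' w'' -> is_write lab w'' -> loc lab w'' = loc lab w' ->
  mo w w''.
Proof.
case: mo_ok => mo_loc _ _ mo_tot mo_ww' po_w'w'' Ww'' Lw''.
have [Ww _ Lww'] := mo_loc _ _ mo_ww'.
have po_ww'' : po w w'' := po_tr (mo_po mo_ww') po_w'w''.
case: (eqVneq w w'') => [eq_w | ne_w]; first by rewrite -eq_w po_irr in po_ww''.
have /orP [// | mo_w''w] := mo_tot _ _ Ww Ww'' (etrans Lww' (esym Lw'')) ne_w.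
by have := po_tr (mo_po mo_w''w) po_ww''; rewrite po_irr.
Qed.

Lemma relaxed_read_coherence_below (m g : E -> E) x r w w' :
  rf_wf lab m -> rf_wf lab g -> rf_le lab po m g ->
  relaxed_read_coherence lab po mo g ->
  rf_rel lab m w r -> m r = g r -> mo_x lab mo x w w' ->
  ~ (po w' r \/ exists r', rf_rel lab m w' r' /\ po r' r).
Proof.
move=> m_ok g_ok le coh [Rr <-] eq_r mox.
rewrite eq_r in mox; have rf_g : rf_rel lab g (g r) r by [].
case=> [po_w'r | [r' [[Rr' m_r'] po_r'r]]].
  by apply: (coh x r _ w' rf_g mox); left.
subst w'.
apply: (coh x r (g r) (g r') rf_g); last by right; exists r'.
case: (le r' Rr') => [<- // | po_mg].
move/and3P: mox => [mo_gm /eqP Lg /eqP Lm].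
have [Wg' Lg' _] := g_ok r' Rr'; have [_ Lm' _] := m_ok r' Rr'.
apply/and3P; split; rewrite ?Lg //.
  by apply: mo_po_trans mo_gm po_mg Wg' _; rewrite Lg' -Lm'.
by rewrite Lg' -Lm' Lm.
Qed.

End ReadsFrom.

Section MinReadsFrom.
Variables (E : finType) (Loc Val : eqType) (lab : E -> label Loc Val).
Variables (tid : E -> nat) (po : rel E) (rf1 rf2 : E -> E).

Lemma rf_min_wf : rf_wf lab rf1 -> rf_wf lab rf2 -> rf_wf lab (rf_min po rf1 rf2).
Proof. by move=> ok1 ok2 r; rewrite /rf_min; case: ifP => _; [apply: ok2 | apply: ok1]. Qed.

Lemma rf_min_le_l : rf_le lab po (rf_min po rf1 rf2) rf1.
Proof. by move=> r _; rewrite /rf_min; case: ifP => po_21; [right | left]. Qed.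

Lemma rf_min_le_r :
  po_wf tid po -> one_writer lab tid -> rf_wf lab rf1 -> rf_wf lab rf2 ->
  rf_le lab po (rf_min po rf1 rf2) rf2.
Proof.
case=> _ _ po_tot _ onew ok1 ok2 r Rr; rewrite /rf_min.
case: ifP => [_ | po_21]; first by left.
case: (eqVneq (rf1 r) (rf2 r)) => [-> | ne_12]; first by left.
have [W1 L1 _] := ok1 r Rr; have [W2 L2 _] := ok2 r Rr.
have := po_tot _ _ (onew _ _ W1 W2 (etrans L1 (esym L2))) ne_12.
by rewrite po_21 orbF; right.
Qed.

End MinReadsFrom.

Theorem mainTheorem8 (E : finType) (Loc Val : eqType)
  (lab : E -> label Loc Val) (tid : E -> nat) (po mo : rel E)
  (rf1 rf2 : E -> E) :
  po_wf tid po -> one_writer lab tid -> mo_wf lab mo ->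
  mo_agrees_po po mo ->
  rf_wf lab rf1 -> rf_wf lab rf2 ->
  (rf_le lab po rf1 rf2 -> has_cycle (po_rf lab po rf1) ->
     has_cycle (po_rf lab po rf2)) /\
  (relaxed_read_coherence lab po mo rf1 ->
   relaxed_read_coherence lab po mo rf2 ->
   relaxed_read_coherence lab po mo (rf_min po rf1 rf2)).
Proof.
move=> po_ok onew mo_ok mo_po ok1 ok2.
have [po_irr po_tr _ _] := po_ok.
split=> [le [e cyc] | coh1 coh2 x r w w' rf_r mox].
  by exists e; apply: clos_trans_po_rf_le cyc.
have m_ok := rf_min_wf po ok1 ok2.
have below := relaxed_read_coherence_below po_irr po_tr mo_ok mo_po m_ok.
case: (boolP (po (rf2 r) (rf1 r))) => po_21.
- apply: (below _ _ _ _ _ ok2 (rf_min_le_r po_ok onew ok1 ok2) coh2 rf_r _ mox).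
  by rewrite /rf_min po_21.
- apply: (below _ _ _ _ _ ok1 (rf_min_le_l po rf1 rf2) coh1 rf_r _ mox).
  by rewrite /rf_min (negbTE po_21).
Qed.
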